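(* Let $1\le m<n$, let $h\in\mathbb{R}[x_1,\ldots,x_n]$, and let $\boldsymbol{\ell}\in\mathbb{R}^{n\times m}$, $\mathbf{s}\in\mathbb{R}^{n\times(n-m)}$ be such that $[\boldsymbol{\ell},\mathbf{s}]$ is an orthogonal $n\times n$ matrix. Let $\theta_1,\ldots,\theta_r>0$ and $\mathbf{v}_1,\ldots,\mathbf{v}_r\in\mathcal{E}_{n-m}$. Define, for $\mathbf{x}\in\mathcal{E}_n$, \[ \hat h(\mathbf{x}):=\sum_{j=1}^r\theta_j\,h\big(\boldsymbol{\ell}\boldsymbol{\ell}^T\mathbf{x}+(1-\|\boldsymbol{\ell}^T\mathbf{x}\|^2)^{1/2}\,\mathbf{s}\mathbf{v}_j\big), \] and the polynomial $\hat f\in\mathbb{R}[X_1,\ldots,X_m,Y]$ by \[ \hat f(X,Y):=\sum_{j=1}^r\theta_j\,h\big(\boldsymbol{\ell}X+Y\,\mathbf{s}\mathbf{v}_j\big),\qquad (X,Y)\in\mathbb{R}^m\times\mathbb{R}. \] Let \[ \rho^+:=\min\{\hat f(X,Y):(X,Y)\in\mathbb{S}^m,\ Y\ge0\},\qquad \rho^-:=\min\{\hat f(X,-Y):(X,Y)\in\mathbb{S}^m,\ Y\le0\}, \] and $\rho:=\min[\rho^+,\rho^-]$ (so that $\rho=\min\{\hat f(X,|Y|):(X,Y)\in\mathbb{S}^m\}$). Then \[ \min\{\hat h(\mathbf{x}):\mathbf{x}\in\mathbb{S}^{n-1}\}=\min\{\hat h(\mathbf{x}):\mathbf{x}\in\mathcal{E}_n\}=\rho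 . \]
   Context: $\mathcal{E}_k=\{\mathbf{x}\in\mathbb{R}^k:\|\mathbf{x}\|\le1\}$ is the closed Euclidean unit ball and $\mathbb{S}^{k-1}=\{\mathbf{x}\in\mathbb{R}^k:\|\mathbf{x}\|=1\}$ the unit sphere of $\mathbb{R}^k$ (so $\mathbb{S}^m\subset\mathbb{R}^{m+1}$). In the paper, the columns of $\boldsymbol{\ell}$ and $\mathbf{s}$ are orthonormal eigenvectors of $\mathrm{E}_{\mu_n}[\nabla h\nabla h^T]$ ($\mu_n$ the uniform probability on $\mathcal{E}_n$) associated with the $m$ largest, resp. the remaining $n-m$, eigenvalues, and $(\theta_j,\mathbf{v}_j)$ is a cubature rule on $\mathcal{E}_{n-m}$ exact for the degree of $h$; only the orthogonality of $[\boldsymbol{\ell},\mathbf{s}]$ and $\theta_j>0$, $\mathbf{v}_j\in\mathcal{E}_{n-m}$ are used in the statement. *)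

From HB Require Import structures.
From mathcomp Require Import all_boot all_order all_algebra.
From mathcomp Require Import mpoly.
From mathcomp Require Import reals.
Set Implicit Arguments. Unset Strict Implicit. Unset Printing Implicit Defensive.
Import Order.TTheory GRing.Theory Num.Theory.
Local Open Scope ring_scope.

Definition sqnorm (R : realType) (p : nat) (x : 'cV[R]_p) : R :=
  \sum_(i < p) x i 0 ^+ 2.

Definition mevalcv (R : realType) (p : nat) (h : {mpoly R[p]}) (x : 'cV[R]_p) : R :=
  h.@[fun i => x i 0].

Definition is_min (T : Type) (R : realType) (A : T -> Prop) (f : T -> R) (v : R) : Prop :=
  (exists2 x, A x & f x = v) /\ (forall x, A x -> v <= f x).

Definition hhat (R : realType) (m k r : nat) (h : {mpoly R[m + k]})
  (l : 'M[R]_(m + k, m)) (s : 'M[R]_(m + k, k))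
  (theta : 'I_r -> R) (v : 'I_r -> 'cV[R]_k) (x : 'cV[R]_(m + k)) : R :=
  \sum_(j < r) theta j *
     mevalcv h (l *m l^T *m x + Num.sqrt (1 - sqnorm (l^T *m x)) *: (s *m v j)).

Definition fhat (R : realType) (m k r : nat) (h : {mpoly R[m + k]})
  (l : 'M[R]_(m + k, m)) (s : 'M[R]_(m + k, k))
  (theta : 'I_r -> R) (v : 'I_r -> 'cV[R]_k) (X : 'cV[R]_m) (Y : R) : R :=
  \sum_(j < r) theta j * mevalcv h (l *m X + Y *: (s *m v j)).

From HB Require Import structures.
From mathcomp Require Import all_boot all_order all_algebra.
From mathcomp Require Import mpoly.
From mathcomp Require Import all_classical all_reals all_analysis.
Import Order.TTheory GRing.Theory Num.Theory.
Import numFieldNormedType.Exports.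
Local Open Scope classical_set_scope.
Local Open Scope ring_scope.

(* For |x| <= 1 the point (l^T x, sqrt (1 - |l^T x|^2)) lies on the closed upper
   hemisphere of S^m and hhat x = fhat at that point; conversely a point (X, Y)
   of that hemisphere is reached from the unit vector l X + Y s e, e a unit
   vector of R^(n-m), because [l, s] is orthogonal.  So hhat on the sphere,
   hhat on the ball and fhat on the upper hemisphere take the same values, and
   the minimum exists since hhat is continuous on the compact sphere.  The
   reflection Y |-> -Y identifies the lower problem with the upper one, so
   rho+ = rho- = rho. *)

Section SquaredNorm.
Variable R : realType.

Lemma sqnormE p (x : 'cV[R]_p) : sqnorm x = (x^T *m x) 0 0.
Proof. by rewrite /sqnorm !mxE; apply: eq_bigr => i _; rewrite mxE expr2. Qed.

Lemma sqnorm_ge0 p (x : 'cV[R]_p) : 0 <= sqnorm x.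
Proof. by apply: sumr_ge0 => i _; apply: sqr_ge0. Qed.

Lemma sqnormZ p c (x : 'cV[R]_p) : sqnorm (c *: x) = c ^+ 2 * sqnorm x.
Proof. by rewrite /sqnorm mulr_sumr; apply: eq_bigr => i _; rewrite mxE exprMn. Qed.

Lemma sqnorm_delta p (i : 'I_p) : sqnorm (delta_mx i 0 : 'cV[R]_p) = 1.
Proof. by rewrite sqnormE trmx_delta mul_delta_mx mxE !eqxx. Qed.

End SquaredNorm.

Lemma is_min_transfer (T U : Type) (R : realType) (A : T -> Prop) (B : U -> Prop)
    (f : T -> R) (g : U -> R) (v : R) :
  (forall x, A x -> exists2 y, B y & g y = f x) ->
  (forall y, B y -> exists2 x, A x & f x = g y) ->
  is_min A f v -> is_min B g v.
Proof.
move=> AB BA [[x0 Ax0 <-] f_ge]; split; first by have [y By <-] := AB x0 Ax0; exists y.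
by move=> y /BA [x Ax <-]; apply: f_ge.
Qed.

Definition upper_hemisphere {R : realType} {m : nat} (XY : 'cV[R]_m * R) : Prop :=
  sqnorm XY.1 + XY.2 ^+ 2 = 1 /\ 0 <= XY.2.

Definition lower_hemisphere {R : realType} {m : nat} (XY : 'cV[R]_m * R) : Prop :=
  sqnorm XY.1 + XY.2 ^+ 2 = 1 /\ XY.2 <= 0.

Lemma is_min_lower_hemisphere (R : realType) (m : nat) (g : 'cV[R]_m -> R -> R) v :
  is_min (@upper_hemisphere R m) (fun XY => g XY.1 XY.2) v ->
  is_min (@lower_hemisphere R m) (fun XY => g XY.1 (- XY.2)) v.
Proof.
apply: is_min_transfer => -[X Y] [XY1 Y0]; exists (X, - Y);
  by rewrite /upper_hemisphere /lower_hemisphere /= ?opprK ?sqrrN ?oppr_le0 ?oppr_ge0.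
Qed.

Section Continuity.
Variables (R : realType) (n : nat).
Implicit Types f : 'rV[R]_n -> R.

Lemma continuous_sum (I : Type) (r : seq I) (P : pred I) (F : I -> 'rV[R]_n -> R) :
  (forall i, continuous (F i)) -> continuous (fun w => \sum_(i <- r | P i) F i w).
Proof.
move=> F_cont; rewrite -fct_sumE.
apply: (big_ind (fun f : _ -> R => continuous f)) => [|f g fc gc x|i _].
- exact: cst_continuous.
- exact: continuousD (fc x) (gc x).
- exact: F_cont.
Qed.

Lemma continuous_prod (I : Type) (r : seq I) (P : pred I) (F : I -> 'rV[R]_n -> R) :
  (forall i, continuous (F i)) -> continuous (fun w => \prod_(i <- r | P i) F i w).
Proof.
move=> F_cont; rewrite -fct_prodE.
apply: (big_ind (fun f : _ -> R => continuous f)) => [|f g fc gc x|i _].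
- exact: cst_continuous.
- exact: continuousM (fc x) (gc x).
- exact: F_cont.
Qed.

Lemma continuous_exprn f k : continuous f -> continuous (fun w => f w ^+ k).
Proof. by move=> f_cont x; apply: continuous_comp (f_cont x) (@exprn_continuous R k _). Qed.

Lemma continuous_meval p (q : {mpoly R[p]}) (g : 'I_p -> 'rV[R]_n -> R) :
  (forall i, continuous (g i)) -> continuous (fun w => q.@[fun i => g i w]).
Proof.
move=> g_cont; under eq_fun do rewrite mevalE.
apply: continuous_sum => mu x; apply: continuousM; first exact: cst_continuous.
by apply: continuous_prod => i; apply: continuous_exprn.
Qed.

Lemma continuous_mulmx_coord p (M : 'M[R]_(p, n)) i j :
  continuous (fun w : 'rV[R]_n => (M *m w^T) i j).
Proof.
have -> : (fun w : 'rV[R]_n => (M *m w^T) i j) = (fun w => \sum_a M i a * w j a).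
  by apply/funext => w; rewrite mxE; apply: eq_bigr => a _; rewrite mxE.
apply: continuous_sum => a x; apply: continuousM; first exact: cst_continuous.
exact: coord_continuous.
Qed.

Lemma continuous_sqnorm_mulmx p (M : 'M[R]_(p, n)) :
  continuous (fun w : 'rV[R]_n => sqnorm (M *m w^T)).
Proof.
by apply: continuous_sum => i; apply/continuous_exprn/continuous_mulmx_coord.
Qed.

(* Compactness is available for row vectors ([rV_compact]), so the topological
   part works on rows and transposes. *)
Lemma unit_sphere_compact : compact [set w : 'rV[R]_n | sqnorm w^T = 1].
Proof.
apply: (@subclosed_compact _ _ [set w : 'rV[R]_n | forall i, w ord0 i \in `[(-1 : R), 1]]).
- rewrite (_ : mkset _ = (fun w => sqnorm (1%:M *m w^T)) @^-1` [set x | x = 1]).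
    apply: preimage_closed; last exact: closed_eq.
    by move=> w _; apply: continuous_sqnorm_mulmx.
  by apply/funext => w /=; rewrite mul1mx.
- by apply: (@rV_compact _ _ (fun=> `[(-1 : R), 1]%classic)) => _; apply: segment_compact.
- move=> w /= w1 i; rewrite in_itv /= -ler_norml.
  have : w ord0 i ^+ 2 <= 1.
    rewrite -w1 /sqnorm (bigD1 i) //= mxE lerDl.
    by apply: sumr_ge0 => j _; apply: sqr_ge0.
  by rewrite -real_normK ?num_real // (expr_le1 (n := 2)).
Qed.

End Continuity.

Lemma unit_sphere_min {R : realType} {n : nat} {f : 'rV[R]_n -> R} :
  (0 < n)%N -> continuous f ->
  exists2 w, sqnorm w^T = 1 & forall w', sqnorm w'^T = 1 -> f w <= f w'.
Proof.
move=> n_gt0 f_cont.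
have sphere0 : [set w : 'rV[R]_n | sqnorm w^T = 1] !=set0.
  by exists (delta_mx 0 (Ordinal n_gt0)); rewrite /= trmx_delta sqnorm_delta.
have [w /set_mem w1 w_min] :=
  compact_EVT_min sphere0 (unit_sphere_compact R n) (continuous_subspaceT f_cont).
by exists w => // w' w'1; apply/w_min/mem_set.
Qed.

Section OrthonormalFrame.
Context {R : realType} {m k : nat} {l : 'M[R]_(m + k, m)} {s : 'M[R]_(m + k, k)}.
Hypothesis frame : (row_mx l s)^T *m row_mx l s = 1%:M.

Lemma frame_blocks : [/\ l^T *m l = 1%:M, l^T *m s = 0, s^T *m l = 0,
  s^T *m s = 1%:M & l *m l^T + s *m s^T = 1%:M].
Proof.
have cols := frame; have rows := mulmx1C frame.
rewrite tr_row_mx mul_col_mx !mul_mx_row scalar_mx_block -/(block_mx _ _ _ _) in cols.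
rewrite tr_row_mx mul_row_col in rows.
by have [ll ls sl ss] := eq_block_mx cols.
Qed.

Lemma sqnorm_frame_coord (x : 'cV[R]_(m + k)) :
  sqnorm x = sqnorm (l^T *m x) + sqnorm (s^T *m x).
Proof.
have [_ _ _ _ frame_rows] := frame_blocks.
rewrite !sqnormE !trmx_mul !trmxK.
have -> : x^T *m x = x^T *m l *m (l^T *m x) + x^T *m s *m (s^T *m x).
  by rewrite -[X in _ *m X](mul1mx x) -frame_rows mulmxDl mulmxDr !mulmxA.
by rewrite mxE.
Qed.

Lemma frame_coord_comb (X : 'cV[R]_m) (z : 'cV[R]_k) :
  l^T *m (l *m X + s *m z) = X /\ s^T *m (l *m X + s *m z) = z.
Proof.
have [ll ls sl ss _] := frame_blocks.
by rewrite !mulmxDr !mulmxA ll ls sl ss !mul0mx !mul1mx addr0 add0r.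
Qed.

Lemma sqnorm_frame_comb (X : 'cV[R]_m) (z : 'cV[R]_k) :
  sqnorm (l *m X + s *m z) = sqnorm X + sqnorm z.
Proof. by have [lx sz] := frame_coord_comb X z; rewrite sqnorm_frame_coord lx sz. Qed.

Lemma sqnorm_trmx_frame_le (x : 'cV[R]_(m + k)) : sqnorm (l^T *m x) <= sqnorm x.
Proof. by rewrite sqnorm_frame_coord lerDl sqnorm_ge0. Qed.

Context {h : {mpoly R[m + k]}} {r : nat} {theta : 'I_r -> R} {v : 'I_r -> 'cV[R]_k}.
Local Notation hhat := (hhat h l s theta v).
Local Notation fhat := (fhat h l s theta v).

Lemma hhat_fhat (x : 'cV[R]_(m + k)) :
  hhat x = fhat (l^T *m x) (Num.sqrt (1 - sqnorm (l^T *m x))).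
Proof. by apply: eq_bigr => j _; rewrite -mulmxA. Qed.

Lemma continuous_hhat_trmx : continuous (fun w : 'rV[R]_(m + k) => hhat w^T).
Proof.
pose c (w : 'rV[R]_(m + k)) := Num.sqrt (1 - sqnorm (l^T *m w^T)).
have c_cont : continuous c.
  move=> w; apply: (continuous_comp (f := fun w => 1 - sqnorm (l^T *m w^T))
    (g := Num.sqrt)); last exact: sqrt_continuous.
  by apply: continuousB; [apply: cst_continuous | apply: continuous_sqnorm_mulmx].
have -> : (fun w => hhat w^T) = (fun w => \sum_(j < r) theta j *
    h.@[fun i => (l *m l^T *m w^T) i 0 + c w * (s *m v j) i 0]).
  apply/funext => w; apply: eq_bigr => j _; congr (_ * _).
  by apply: meval_eq => i; rewrite !mxE.
apply: continuous_sum => j w; apply: continuousM; first exact: cst_continuous.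
apply: continuous_meval => i x.
apply: (continuousD (f := fun w => (l *m l^T *m w^T) i 0)
                    (g := fun w => c w * (s *m v j) i 0)).
  exact: continuous_mulmx_coord.
by apply: continuousM; [apply: c_cont | apply: cst_continuous].
Qed.

Lemma ball_to_upper_hemisphere (x : 'cV[R]_(m + k)) : sqnorm x <= 1 ->
  exists2 XY, upper_hemisphere XY & fhat XY.1 XY.2 = hhat x.
Proof.
move=> x_le1; exists (l^T *m x, Num.sqrt (1 - sqnorm (l^T *m x))); last first.
  by rewrite hhat_fhat.
have : 0 <= 1 - sqnorm (l^T *m x).
  by rewrite subr_ge0 (le_trans (sqnorm_trmx_frame_le x)).
by split; [rewrite sqr_sqrtr // addrC subrK | apply: sqrtr_ge0].
Qed.

Lemma upper_hemisphere_to_sphere (k_gt0 : (0 < k)%N) XY : upper_hemisphere XY ->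
  exists2 x, sqnorm x = 1 & hhat x = fhat XY.1 XY.2.
Proof.
case: XY => X Y [/= XY1 Y0].
exists (l *m X + s *m (Y *: delta_mx (Ordinal k_gt0) 0)).
  by rewrite sqnorm_frame_comb sqnormZ sqnorm_delta mulr1.
have [lx _] := frame_coord_comb X (Y *: delta_mx (Ordinal k_gt0) 0).
rewrite hhat_fhat lx (_ : 1 - sqnorm X = Y ^+ 2); last by rewrite -XY1 addrC addKr.
by rewrite sqrtr_sqr ger0_norm.
Qed.

End OrthonormalFrame.

Theorem mainTheorem5 (R : realType) (m k : nat) (hm : (1 <= m)%N) (hk : (1 <= k)%N)
  (h : {mpoly R[m + k]}) (l : 'M[R]_(m + k, m)) (s : 'M[R]_(m + k, k))
  (horth : (row_mx l s)^T *m row_mx l s = 1%:M)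
  (r : nat) (theta : 'I_r -> R) (v : 'I_r -> 'cV[R]_k)
  (htheta : forall j, 0 < theta j) (hv : forall j, sqnorm (v j) <= 1) :
  exists rhop rhom : R,
    is_min (fun XY : 'cV[R]_m * R => sqnorm XY.1 + XY.2 ^+ 2 = 1 /\ 0 <= XY.2)
      (fun XY => fhat h l s theta v XY.1 XY.2) rhop /\
    is_min (fun XY : 'cV[R]_m * R => sqnorm XY.1 + XY.2 ^+ 2 = 1 /\ XY.2 <= 0)
      (fun XY => fhat h l s theta v XY.1 (- XY.2)) rhom /\
    is_min (fun x : 'cV[R]_(m + k) => sqnorm x = 1)
      (hhat h l s theta v) (Num.min rhop rhom) /\
    is_min (fun x : 'cV[R]_(m + k) => sqnorm x <= 1)
      (hhat h l s theta v) (Num.min rhop rhom).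
Proof.
set F := hhat h l s theta v.
have F_cont : continuous (fun w : 'rV[R]_(m + k) => F w^T) := continuous_hhat_trmx.
have [w w1 w_min] := unit_sphere_min (ltn_addl m hk) F_cont.
have sphere : is_min (fun x => sqnorm x = 1) F (F w^T).
  split=> [|x x1]; first by exists w^T.
  by have := w_min x^T; rewrite trmxK; apply.
have upper : is_min upper_hemisphere (fun XY => fhat h l s theta v XY.1 XY.2) (F w^T).
  apply: is_min_transfer sphere => [x x1|]; last exact: upper_hemisphere_to_sphere.
  by apply: (ball_to_upper_hemisphere horth); rewrite x1.
exists (F w^T), (F w^T); rewrite minxx; split; first exact: upper.
split; first exact: is_min_lower_hemisphere.
split=> //; apply: is_min_transfer upper => [XY XY1|x]; last exact: ball_to_upper_hemisphere.
have [x x1 <-] : exists2 x, sqnorm x = 1 & F x = fhat h l s theta v XY.1 XY.2.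
  exact: upper_hemisphere_to_sphere.
by exists x; rewrite ?x1.
Qed.
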